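(* Let $\pi$ be an irreducible bounded $*$-representation of $\mathcal{A}(\Sigma^{2n+1}_q)$ on a Hilbert space $\mathcal{H}$ with $\pi(y_{n+1})\ne0$. Then: (i) $\pi(y_{n+1})$ is injective; (ii) there exists a vector $\xi\neq0$ in $\mathcal{H}$ such that $\pi(y_i)\xi=0$ for all $1\le i\le n$.
   Context: Let $0<q<1$, $n\ge1$. $\mathcal{A}(\Sigma^{2n+1}_q)$ is the quotient of the quantum sphere algebra $\mathcal{A}(S^{4n-1}_q)$ (the complex unital $*$-algebra generated by $x_1,\dots,x_n,y_1,\dots,y_n$ and adjoints subject to: $x_ix_j=q^{-1}x_jx_i$ ($i<j$); $y_iy_j=q^{-1}y_jy_i$ ($i>j$); $x_iy_j=q^{-1}y_jx_i$ ($i\ne j$); $y_ix_i=q^2x_iy_i+(q^2-1)\sum_{k=1}^{i-1}q^{i-k}x_ky_k$; $x_ix_i^*=x_i^*x_i+(1-q^2)\sum_{k=1}^{i-1}x_k^*x_k$; $y_iy_i^*=y_i^*y_i+(1-q^2)\{q^{2(n+1-i)}x_i^*x_i+\sum_{k=1}^n x_k^*x_k+\sum_{k=i+1}^n y_k^*y_k\}$; $x_iy_i^*=q^2y_i^*x_i$; $x_ix_j^*=qx_j^*x_i$ ($i\ne j$); $y_iy_j^*=qy_j^*y_i-(q^2-1)q^{2n+2-i-j}x_i^*x_j$ ($i\neq j$); $x_iy_j^*=qy_j^*x_i$ ($i<j$); $x_iy_j^*=qy_j^*x_i+(q^2-1)q^{i-j}y_i^*x_j$ ($i>j$); $\sum_{i=1}^n(x_i^*x_i+y_i^*y_i)=1$)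 by the two-sided $*$-ideal generated by $x_1,\dots,x_{n-1}$; in it $y_1,\dots,y_n$ denote the images of $y_1,\dots,y_n$ and $y_{n+1}$ the image of $x_n$. In this quotient $y_{n+1}$ is normal and (with adjoints): $y_iy_j=q^{-1}y_jy_i$, $y_i^*y_j=q^{-1}y_jy_i^*$ for $i>j$, $(i,j)\ne(n+1,n)$; $y_{n+1}y_n=q^{-2}y_ny_{n+1}$, $y_{n+1}^*y_n=q^{-2}y_ny_{n+1}^*$; $[y_i,y_i^*]=(1-q^2)\sum_{k=i+1}^{n+1}y_k^*y_k$ ($i\ne n$); $[y_n,y_n^*]=(1-q^4)y_{n+1}^*y_{n+1}$; $\sum_{i=1}^{n+1}y_i^*y_i=1$. *)

From HB Require Import structures.
From mathcomp Require Import all_boot all_order all_algebra.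
From mathcomp Require Import complex.
From mathcomp Require Import reals.
Set Implicit Arguments. Unset Strict Implicit. Unset Printing Implicit Defensive.
Import Order.TTheory GRing.Theory Num.Theory.
Local Open Scope ring_scope.

Section Hilbert.
Variables (R : realType) (V : lmodType R[i]) (ip : V -> V -> R[i]).

Definition inner_product : Prop :=
  [/\ (forall x y z, ip (x + y) z = ip x z + ip y z),
      (forall (a : R[i]) x y, ip (a *: x) y = a * ip x y),
      (forall x y, ip y x = (ip x y)^*),
      (forall x, 0 <= ip x x) &
      (forall x, ip x x = 0 -> x = 0)].

Definition hnorm (x : V) : R := Num.sqrt (complex.Re (ip x x)).

Definition converges_to (u : nat -> V) (l : V) : Prop :=
  forall e : R, 0 < e -> exists N, forall m, (N <= m)%N -> hnorm (u m - l) < e.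

Definition cauchy_seq (u : nat -> V) : Prop :=
  forall e : R, 0 < e -> exists N, forall m k, (N <= m)%N -> (N <= k)%N ->
    hnorm (u m - u k) < e.

Definition hilbert_space : Prop :=
  inner_product /\
  (forall u, cauchy_seq u -> exists l, converges_to u l).

Definition bounded_op (T : V -> V) : Prop :=
  (forall (a : R[i]) x y, T (a *: x + y) = a *: T x + T y) /\
  (exists M : R, forall x, hnorm (T x) <= M * hnorm x).

Definition is_adjoint (T S : V -> V) : Prop :=
  forall x y, ip (T x) y = ip x (S y).

Definition closed_subspace (W : V -> Prop) : Prop :=
  [/\ W 0,
      (forall (a : R[i]) x y, W x -> W y -> W (a *: x + y)) &
      (forall u l, (forall m, W (u m)) -> converges_to u l -> W l)].

Definition irreducible_family (I : Type) (ops : I -> V -> V) : Prop :=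
  forall W : V -> Prop, closed_subspace W ->
    (forall k x, W x -> W (ops k x)) ->
    (forall x, W x -> x = 0) \/ (forall x, W x).

End Hilbert.

Section Sphere.
Variables (R : realType) (V : lmodType R[i]).
Variables (n : nat) (q : R).
(* X i, Y i, Xs i, Ys i = pi(x_i), pi(y_i), pi(x_i^* ), pi(y_i^* ), 1 <= i <= n *)
Variables (X Y Xs Ys : nat -> V -> V).

Local Notation Q := ((q%:C)%C : R[i]).

(* The defining relations of A(S^{4n-1}_q), evaluated at every vector v. *)
Definition sphere_relations : Prop :=
  (
   (forall i j v, (1 <= i)%N -> (i < j)%N -> (j <= n)%N ->
      X i (X j v) = Q^-1 *: X j (X i v)) /\
   (forall i j v, (1 <= j)%N -> (j < i)%N -> (i <= n)%N ->
      Y i (Y j v) = Q^-1 *: Y j (Y i v)) /\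
   (forall i j v, (1 <= i <= n)%N -> (1 <= j <= n)%N -> i != j ->
      X i (Y j v) = Q^-1 *: Y j (X i v)) /\
   (forall i v, (1 <= i <= n)%N ->
      Y i (X i v) = Q ^+ 2 *: X i (Y i v)
        + (Q ^+ 2 - 1) *: \sum_(1 <= k < i) Q ^+ (i - k) *: X k (Y k v)) /\
   (forall i v, (1 <= i <= n)%N ->
      X i (Xs i v) = Xs i (X i v)
        + (1 - Q ^+ 2) *: \sum_(1 <= k < i) Xs k (X k v)) /\
   (forall i v, (1 <= i <= n)%N ->
      Y i (Ys i v) = Ys i (Y i v)
        + (1 - Q ^+ 2) *: (Q ^+ (2 * (n + 1 - i)) *: Xs i (X i v)
             + \sum_(1 <= k < n.+1) Xs k (X k v)
             + \sum_(i.+1 <= k < n.+1) Ys k (Y k v))) /\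
   (forall i v, (1 <= i <= n)%N -> X i (Ys i v) = Q ^+ 2 *: Ys i (X i v)) /\
   (forall i j v, (1 <= i <= n)%N -> (1 <= j <= n)%N -> i != j ->
      X i (Xs j v) = Q *: Xs j (X i v)) /\
   (forall i j v, (1 <= i <= n)%N -> (1 <= j <= n)%N -> i != j ->
      Y i (Ys j v) = Q *: Ys j (Y i v)
        - (Q ^+ 2 - 1) *: (Q ^+ (2 * n + 2 - i - j) *: Xs i (X j v))) /\
   (forall i j v, (1 <= i)%N -> (i < j)%N -> (j <= n)%N ->
      X i (Ys j v) = Q *: Ys j (X i v)) /\
   (forall i j v, (1 <= j)%N -> (j < i)%N -> (i <= n)%N ->
      X i (Ys j v) = Q *: Ys j (X i v)
        + (Q ^+ 2 - 1) *: (Q ^+ (i - j) *: Ys i (X j v))) /\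
   (forall v, \sum_(1 <= i < n.+1) (Xs i (X i v) + Ys i (Y i v)) = v)).

Definition gens (k : nat * nat) : V -> V :=
  match k.1 with
  | 0 => X k.2 | 1 => Y k.2 | 2 => Xs k.2 | _ => Ys k.2
  end.

End Sphere.

(* Write z = pi(y_{n+1}).  The unit relation reads z^* z + sum_i y_i^* y_i = 1, so
   ||v||^2 = ||z v||^2 + sum_i ||y_i v||^2: z is a normal contraction whose defect
   ||v||^2 - ||z v||^2 equals sum_i ||y_i v||^2.  The relations y_i z = q z y_i (i < n)
   and y_n z = q^2 z y_n shrink the defect of z v by q^2 ||z||^2, so a bound
   ||z||^2 < 1 would improve itself; hence ||z|| = 1 and some x has defect below
   (1 - q)^2 ||x||^2.  The iterates of z^* z starting at x then move by geometrically
   decreasing steps and converge to a fixed vector xi of z^* z lying closer to x than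
   ||x||, so xi <> 0 and ||z xi|| = ||xi||, i.e. every y_i xi vanishes.  Injectivity:
   ker z is a closed subspace invariant under all generators, hence zero by
   irreducibility. *)

From HB Require Import structures.
From mathcomp Require Import all_boot all_order all_algebra.
From mathcomp Require Import complex reals.
From mathcomp Require Import classical_sets topology normedtype sequences.
From mathcomp Require Import ring lra.
Import Order.TTheory GRing.Theory Num.Theory numFieldNormedType.Exports.
Local Open Scope ring_scope.
Set Implicit Arguments. Unset Strict Implicit. Unset Printing Implicit Defensive.

Definition linear_pack (K : pzRingType) (U : lmodType K) (W : zmodType)
    (s : GRing.Scale.law K W) (f : U -> W) (lin_f : linear_for s f) :
  {linear U -> W | s} := HB.pack f (GRing.isLinear.Build K U W s f lin_f).

Section LinearFunction.
Variables (K : pzRingType) (U : lmodType K) (W : zmodType).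
Variables (s : GRing.Scale.law K W) (f : U -> W).
Hypothesis lin_f : linear_for s f.

Lemma lin0 : f 0 = 0. Proof. exact: (linear0 (linear_pack lin_f)). Qed.
Lemma linD x y : f (x + y) = f x + f y.
Proof. exact: (linearD (linear_pack lin_f)). Qed.
Lemma linB x y : f (x - y) = f x - f y.
Proof. exact: (linearB (linear_pack lin_f)). Qed.
Lemma linZ a x : f (a *: x) = s a (f x).
Proof. exact: (linearZ_LR (linear_pack lin_f)). Qed.
Lemma lin_sum (I : Type) (r : seq I) (P : pred I) (F : I -> U) :
  f (\sum_(i <- r | P i) F i) = \sum_(i <- r | P i) f (F i).
Proof. exact: (linear_sum (linear_pack lin_f)). Qed.

End LinearFunction.

Lemma Re_realM (R : realType) (t : R) (a : R[i]) :
  complex.Re (t%:C%C * a) = t * complex.Re a.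
Proof. by case: a => x y /=; ring. Qed.

Lemma Re_conj (R : realType) (a : R[i]) : complex.Re a^* = complex.Re a.
Proof. change (complex.Re (conjc a) = complex.Re a). by case: a. Qed.

Lemma conj_real (R : realType) (t : R) : (t%:C%C : R[i])^* = t%:C%C.
Proof. exact: conjc_real. Qed.

Lemma ge0_complex_real (R : realType) (a : R[i]) : 0 <= a -> a = (complex.Re a)%:C%C.
Proof. by case: a => x y; rewrite lecE /= => /andP[/eqP -> _]. Qed.

Section InnerProduct.
Variables (R : realType) (V : lmodType R[i]) (ip : V -> V -> R[i]).
Hypothesis ip_inner : inner_product ip.

Lemma ipC x y : ip y x = (ip x y)^*.
Proof. by case: ip_inner. Qed.

Lemma ip_scalarl w : scalar (ip^~ w).
Proof. by case: ip_inner => ipD ipZ _ _ _ a x y; rewrite ipD ipZ. Qed.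

Lemma ipDr w x y : ip w (x + y) = ip w x + ip w y.
Proof. by rewrite ipC (linD (ip_scalarl w)) rmorphD /= -!ipC. Qed.

Lemma ipZr w a x : ip w (a *: x) = a^* * ip w x.
Proof. by rewrite ipC (linZ (ip_scalarl w)) rmorphM /= -ipC. Qed.

Lemma ipNr w x : ip w (- x) = - ip w x.
Proof. by rewrite -scaleN1r ipZr rmorphN1 mulN1r. Qed.

Lemma adjoint_swap T S : is_adjoint ip T S -> forall x y, ip (S y) x = ip y (T x).
Proof. by move=> adj x y; rewrite ipC -adj -ipC. Qed.

Lemma ip0r w : ip w 0 = 0.
Proof. by rewrite ipC (lin0 (ip_scalarl w)) conjC0. Qed.

Definition sqnorm x : R := complex.Re (ip x x).

Lemma sqnormE x : sqnorm x = complex.Re (ip x x). Proof. by []. Qed.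

Lemma ip_sqnorm x : ip x x = (sqnorm x)%:C%C.
Proof. by apply: ge0_complex_real; case: ip_inner. Qed.

Lemma sqnorm_ge0 x : 0 <= sqnorm x.
Proof. by rewrite -lecR -ip_sqnorm; case: ip_inner. Qed.

Lemma sqnorm_eq0 x : (sqnorm x == 0) = (x == 0).
Proof.
apply/eqP/eqP => [sq0|->]; last by rewrite /sqnorm (lin0 (ip_scalarl 0)).
by case: ip_inner => _ _ _ _; apply; rewrite ip_sqnorm sq0.
Qed.

Lemma sqnorm0 : sqnorm 0 = 0.
Proof. by apply/eqP; rewrite sqnorm_eq0. Qed.

Lemma sqnorm_gt0 x : (0 < sqnorm x) = (x != 0).
Proof. by rewrite lt_def sqnorm_eq0 sqnorm_ge0 andbT. Qed.

Lemma sqnormD x y : sqnorm (x + y) = sqnorm x + sqnorm y + 2 * complex.Re (ip x y).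
Proof.
rewrite /sqnorm (linD (ip_scalarl _)) !ipDr !raddfD /=.
by rewrite [ip y x]ipC Re_conj; ring.
Qed.

Lemma sqnormN x : sqnorm (- x) = sqnorm x.
Proof. by rewrite /sqnorm -scaleN1r (linZ (ip_scalarl _)) ipZr /= rmorphN1 !mulN1r opprK. Qed.

Lemma sqnormB x y : sqnorm (x - y) = sqnorm x + sqnorm y - 2 * complex.Re (ip x y).
Proof. by rewrite sqnormD sqnormN ipNr raddfN /=; ring. Qed.

Lemma Re_ipZr_real x (t : R) y : complex.Re (ip x (t%:C%C *: y)) = t * complex.Re (ip x y).
Proof. by rewrite ipZr conj_real Re_realM. Qed.

Lemma sqnormZ (t : R) x : sqnorm (t%:C%C *: x) = t ^+ 2 * sqnorm x.
Proof.
by rewrite /sqnorm (linZ (ip_scalarl _)) /= Re_realM Re_ipZr_real mulrA -expr2.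
Qed.

Lemma Cauchy_Schwarz x y : complex.Re (ip x y) ^+ 2 <= sqnorm x * sqnorm y.
Proof.
have [->|y_neq0] := eqVneq y 0.
  by rewrite ip0r sqnorm0 mulr0 expr0n.
have y_gt0 : 0 < sqnorm y by rewrite sqnorm_gt0.
set r := complex.Re (ip x y); pose t := r / sqnorm y.
have tyr : t * sqnorm y = r by rewrite divfK ?gt_eqF.
have := sqnorm_ge0 (x - t%:C%C *: y).
rewrite sqnormB sqnormZ Re_ipZr_real -/r.
nra.
Qed.

Local Notation hnorm := (hnorm ip).

Lemma hnormE x : hnorm x = Num.sqrt (sqnorm x). Proof. by []. Qed.

Lemma hnorm_ge0 x : 0 <= hnorm x. Proof. exact: sqrtr_ge0. Qed.

Lemma sqr_hnorm x : hnorm x ^+ 2 = sqnorm x.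
Proof. by rewrite sqr_sqrtr ?sqnorm_ge0. Qed.

Lemma hnorm_le x c : 0 <= c -> sqnorm x <= c ^+ 2 -> hnorm x <= c.
Proof. by move=> c_ge0 le_xc; rewrite -(ger0_norm c_ge0) -sqrtr_sqr ler_sqrt ?sqr_ge0. Qed.

Lemma hnorm_eq0 x : (hnorm x == 0) = (x == 0).
Proof. by rewrite sqrtr_eq0 -sqnorm_eq0 eq_le sqnorm_ge0 andbT. Qed.

Lemma hnorm_gt0 x : (0 < hnorm x) = (x != 0).
Proof. by rewrite lt_def hnorm_eq0 hnorm_ge0 andbT. Qed.

Lemma hnorm0 : hnorm 0 = 0.
Proof. by apply/eqP; rewrite hnorm_eq0. Qed.

Lemma hnormN x : hnorm (- x) = hnorm x.
Proof. by rewrite hnormE sqnormN. Qed.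

Lemma hnormB_sym x y : hnorm (x - y) = hnorm (y - x).
Proof. by rewrite -hnormN opprB. Qed.

Lemma Re_ip_le x y : complex.Re (ip x y) <= hnorm x * hnorm y.
Proof.
apply: le_trans (ler_norm _) _.
rewrite -sqrtr_sqr -[hnorm x * _]ger0_norm ?mulr_ge0 ?hnorm_ge0 // -sqrtr_sqr.
by rewrite ler_sqrt ?sqr_ge0 // exprMn !sqr_hnorm Cauchy_Schwarz.
Qed.

Lemma hnormD x y : hnorm (x + y) <= hnorm x + hnorm y.
Proof.
apply: hnorm_le; first by rewrite addr_ge0 ?hnorm_ge0.
rewrite sqnormD sqrrD !sqr_hnorm [X in _ <= X]addrAC lerD2l mulr2n.
have := Re_ip_le x y; lra.
Qed.

Lemma hnorm_sub_le x y w : hnorm (x - w) <= hnorm (x - y) + hnorm (y - w).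
Proof. by have := hnormD (x - y) (y - w); rewrite addrA subrK. Qed.

Lemma eq0_hnorm_lt x : (forall e, 0 < e -> hnorm x < e) -> x = 0.
Proof. by move=> small; apply/eqP/contraT; rewrite -hnorm_gt0 => /small; rewrite ltxx. Qed.

Lemma converges_to_unique u l l' :
  converges_to ip u l -> converges_to ip u l' -> l = l'.
Proof.
move=> ul ul'; apply/eqP; rewrite -subr_eq0; apply/eqP/eq0_hnorm_lt => e e_gt0.
have e2_gt0 : 0 < e / 2 by rewrite divr_gt0.
have [N hN] := ul _ e2_gt0; have [N' hN'] := ul' _ e2_gt0.
set m := maxn N N'.
have lt_l := hN m (leq_maxl N N'); have lt_l' := hN' m (leq_maxr N N').
have := hnorm_sub_le l (u m) l'; rewrite (hnormB_sym l (u m)).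
lra.
Qed.

Lemma converges_to_bounded T u l : bounded_op ip T ->
  converges_to ip u l -> converges_to ip (T \o u) (T l).
Proof.
move=> [linT [M bound]] ul e e_gt0.
have M1_gt0 : 0 < `|M| + 1 by rewrite ltr_wpDl.
have [N hN] := ul _ (divr_gt0 e_gt0 M1_gt0).
exists N => m le_Nm /=; rewrite -(linB linT).
apply: le_lt_trans (bound _) _.
have := hN m le_Nm; rewrite ltr_pdivlMr // => lt_e; apply: le_lt_trans lt_e.
by rewrite mulrC ler_wpM2l ?hnorm_ge0 // (le_trans (ler_norm M)) // lerDl.
Qed.

Lemma kernel_closed T : bounded_op ip T -> closed_subspace ip (fun x => T x = 0).
Proof.
move=> bT; have [linT _] := bT.
split=> [|a x y Tx Ty|u l Tu ul]; first exact: lin0 linT.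
  by rewrite linT Tx Ty scaler0 addr0.
apply: converges_to_unique (converges_to_bounded bT ul) _.
by exists 0%N => m _; rewrite /= Tu subrr hnorm0.
Qed.

Lemma hnorm_limit_le a b u l :
  (forall m, hnorm (a - u m) <= b) -> converges_to ip u l -> hnorm (a - l) <= b.
Proof.
move=> bound ul; apply/ler_addgt0Pr => e e_gt0.
have [N hN] := ul e e_gt0.
apply: le_trans (hnorm_sub_le a (u N) l) _.
exact: lerD (bound N) (ltW (hN N (leqnn N))).
Qed.

Lemma geometric_eventually_lt (c r e : R) : 0 <= r -> r < 1 -> 0 < e ->
  exists N, forall m, (N <= m)%N -> c * r ^+ m < e.
Proof.
move=> r_ge0 r_lt1 e_gt0.
have r_norm_lt1 : `|r| < 1 by rewrite ger0_norm.
have [N _ hN] := cvgr0_norm_lt _ (cvg_geometric c r_norm_lt1) _ e_gt0.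
by exists N => m /hN /=; apply: le_lt_trans (ler_norm _).
Qed.

Section GeometricSteps.
Variables (u : nat -> V) (c r : R).
Hypotheses (c_ge0 : 0 <= c) (r_ge0 : 0 <= r) (r_lt1 : r < 1).
Hypothesis step : forall m, hnorm (u m - u m.+1) <= c * r ^+ m.

Lemma geometric_tail_le k j : hnorm (u k - u (k + j)) <= c * r ^+ k / (1 - r).
Proof.
have r1_gt0 : 0 < 1 - r by rewrite subr_gt0.
suff tail : hnorm (u k - u (k + j)) <= c * (r ^+ k - r ^+ (k + j)) / (1 - r).
  apply: le_trans tail _.
  by rewrite ler_pM2r ?invr_gt0 // ler_wpM2l // gerBl exprn_ge0.
elim: j => [|j IHj]; first by rewrite addn0 !subrr hnorm0 mulr0 mul0r.
have -> : c * (r ^+ k - r ^+ (k + j.+1)) / (1 - r) =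
    c * (r ^+ k - r ^+ (k + j)) / (1 - r) + c * r ^+ (k + j).
  by rewrite addnS exprS; field; rewrite gt_eqF.
apply: le_trans (hnorm_sub_le _ (u (k + j)) _) _.
by rewrite addnS; apply: lerD IHj (step _).
Qed.

Lemma geometric_cauchy : cauchy_seq ip u.
Proof.
move=> e e_gt0.
have [N hN] := geometric_eventually_lt (2 * c / (1 - r)) r_ge0 r_lt1 e_gt0.
exists N => m k le_Nm le_Nk.
apply: le_lt_trans (hnorm_sub_le _ (u N) _) _.
rewrite hnormB_sym -(subnKC le_Nm) -(subnKC le_Nk).
apply: le_lt_trans (lerD (geometric_tail_le _ _) (geometric_tail_le _ _)) _.
have -> : c * r ^+ N / (1 - r) + c * r ^+ N / (1 - r) = 2 * c / (1 - r) * r ^+ N.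
  by field; rewrite subr_eq0 gt_eqF.
exact: hN.
Qed.

End GeometricSteps.

Lemma converges_to_geometric u l (c r : R) : 0 <= r -> r < 1 ->
  (forall m, hnorm (u m - l) <= c * r ^+ m) -> converges_to ip u l.
Proof.
move=> r_ge0 r_lt1 bound e e_gt0.
have [N hN] := geometric_eventually_lt c r_ge0 r_lt1 e_gt0.
by exists N => m /hN; apply: le_lt_trans (bound m).
Qed.

End InnerProduct.

Section NormalContraction.
Variables (R : realType) (V : lmodType R[i]) (ip : V -> V -> R[i]).
Hypothesis ip_inner : inner_product ip.
Hypothesis ip_complete : forall u, cauchy_seq ip u -> exists l, converges_to ip u l.
Variables (q : R) (z zs : V -> V) (I : eqType) (r : seq I) (T : I -> V -> V).
Hypotheses (q_ge0 : 0 <= q) (q_lt1 : q < 1).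
Hypotheses (lin_z : linear z) (lin_zs : linear zs) (z_adj : is_adjoint ip z zs).
Hypothesis z_normal : forall v, z (zs v) = zs (z v).
Hypothesis sqnorm_decomp :
  forall v, sqnorm ip v = sqnorm ip (z v) + \sum_(i <- r) sqnorm ip (T i v).
Hypothesis sqnorm_T_z :
  forall i v, i \in r -> sqnorm ip (T i (z v)) <= q ^+ 2 * sqnorm ip (z (T i v)).
Hypothesis z_neq0 : exists v, z v != 0.

Local Notation sqnorm := (sqnorm ip).
Local Notation hnorm := (hnorm ip).
Local Notation defect v := (sqnorm v - sqnorm (z v)).
Local Notation zsz := (fun v => zs (z v)).

Lemma defectE v : defect v = \sum_(i <- r) sqnorm (T i v).
Proof. by rewrite sqnorm_decomp addrAC subrr add0r. Qed.

Lemma defect_ge0 v : 0 <= defect v.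
Proof. by rewrite defectE sumr_ge0 // => i _; apply: sqnorm_ge0. Qed.

Lemma sqnorm_z_le v : sqnorm (z v) <= sqnorm v.
Proof. by rewrite -subr_ge0 defect_ge0. Qed.

Lemma defect_z_le b : (forall w, sqnorm (z w) <= b * sqnorm w) ->
  forall v, defect (z v) <= q ^+ 2 * b * defect v.
Proof.
move=> z_le_b v; rewrite !defectE mulr_sumr !big_seq; apply: ler_sum => i i_r.
apply: le_trans (sqnorm_T_z v i_r) _; rewrite -mulrA.
by apply: ler_wpM2l; [exact: sqr_ge0 | exact: z_le_b].
Qed.

Lemma defect_z v : defect (z v) <= q ^+ 2 * defect v.
Proof.
have z_le1 w : sqnorm (z w) <= 1 * sqnorm w by rewrite mul1r sqnorm_z_le.
by have := defect_z_le z_le1 v; rewrite mulr1.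
Qed.

Lemma sqnorm_zs v : sqnorm (zs v) = sqnorm (z v).
Proof.
by rewrite !sqnormE (adjoint_swap ip_inner z_adj) z_normal -z_adj.
Qed.

Lemma sqnorm_zsz_le v : sqnorm (zsz v) <= sqnorm (z v).
Proof. by rewrite sqnorm_zs sqnorm_z_le. Qed.

Lemma defect_zsz v : defect (zsz v) <= q ^+ 2 * defect v.
Proof.
rewrite z_normal !sqnorm_zs.
apply: le_trans (defect_z _) _; apply: le_trans _ (defect_z v).
by rewrite ler_piMl ?defect_ge0 ?expr_le1 // ltW.
Qed.

Lemma sqnorm_sub_zsz v : sqnorm (v - zsz v) <= defect v.
Proof.
rewrite (sqnormB ip_inner) -z_adj -sqnormE.
by have := sqnorm_zsz_le v; lra.
Qed.

Lemma hnorm_zsz_le v : hnorm (zsz v) <= hnorm v.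
Proof.
apply: hnorm_le; first exact: hnorm_ge0.
rewrite sqr_hnorm //; exact: le_trans (sqnorm_zsz_le v) (sqnorm_z_le v).
Qed.

(* [sup ratios] is the squared operator norm of [z]. *)
Let ratios := ((fun w => sqnorm (z w) / sqnorm w) @` [set w | w != 0])%classic.

Lemma ratios_ubound b : (forall w, sqnorm (z w) <= b * sqnorm w) -> ubound ratios b.
Proof.
by move=> z_le_b _ [w /= w_neq0 <-]; rewrite ler_pdivrMr ?sqnorm_gt0 ?z_le_b.
Qed.

Lemma exists_ratio_gt0 : exists2 t, ratios t & 0 < t.
Proof.
have [v zv_neq0] := z_neq0.
have v_neq0 : v != 0 by apply: contraNneq zv_neq0 => ->; rewrite (lin0 lin_z).
by exists (sqnorm (z v) / sqnorm v); [exists v | rewrite divr_gt0 ?sqnorm_gt0].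
Qed.

Lemma ratios_has_sup : has_sup ratios.
Proof.
split; first by have [t ratio_t _] := exists_ratio_gt0; exists t.
by exists 1; apply: ratios_ubound => w; rewrite mul1r sqnorm_z_le.
Qed.

Lemma sqnorm_z_le_sup w : sqnorm (z w) <= sup ratios * sqnorm w.
Proof.
have [->|w_neq0] := eqVneq w 0; first by rewrite (lin0 lin_z) sqnorm0 // mulr0.
rewrite -ler_pdivrMr ?sqnorm_gt0 //.
by apply: (sup_upper_bound ratios_has_sup); exists w.
Qed.

Lemma sup_ratios_gt0 : 0 < sup ratios.
Proof.
have [t ratio_t t_gt0] := exists_ratio_gt0.
exact: lt_le_trans t_gt0 (sup_upper_bound ratios_has_sup ratio_t).
Qed.

Lemma sqnorm_z_bound_improve b : 0 <= b -> b < 1 ->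
  (forall w, sqnorm (z w) <= b * sqnorm w) ->
  forall w, sqnorm (z w) <= q ^+ 2 * b / (1 - (1 - q ^+ 2) * b) * sqnorm w.
Proof.
move=> b_ge0 b_lt1 z_le_b w.
have q2_ge0 : 0 <= q ^+ 2 := sqr_ge0 q.
have q2_le1 : q ^+ 2 <= 1 by rewrite expr_le1 // ltW.
have den_gt0 : 0 < 1 - (1 - q ^+ 2) * b by nra.
rewrite mulrAC ler_pdivlMr //.
have := defect_z_le z_le_b w; have := z_le_b (z w); have := sqnorm_ge0 ip_inner (z w).
nra.
Qed.

Lemma sup_ratios_ge1 : 1 <= sup ratios.
Proof.
rewrite leNgt; apply/negP => sup_lt1.
have sup_gt0 := sup_ratios_gt0.
have q2_lt1 : q ^+ 2 < 1 by rewrite expr_lt1.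
have := ge_sup ratios_has_sup.1
  (ratios_ubound (sqnorm_z_bound_improve (ltW sup_gt0) sup_lt1 sqnorm_z_le_sup)).
set a := sup ratios in sup_lt1 sup_gt0 *.
have den_gt0 : 0 < 1 - (1 - q ^+ 2) * a by nra.
have gap_gt0 : 0 < a * (1 - q ^+ 2) * (1 - a) by rewrite !mulr_gt0 // subr_gt0.
by rewrite ler_pdivlMr //; nra.
Qed.

Lemma almost_isometric d : 0 < d -> exists2 x, x != 0 & defect x < d * sqnorm x.
Proof.
move=> d_gt0; have [_ [x /= x_neq0 <-]] := sup_adherent d_gt0 ratios_has_sup.
rewrite ltr_pdivlMr ?sqnorm_gt0 // => lt_ratio; exists x => //.
have := sup_ratios_ge1; have := sqnorm_gt0 ip_inner x; rewrite x_neq0.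
nra.
Qed.

Lemma defect_iter_zsz x m : defect (iter m zsz x) <= (q ^+ 2) ^+ m * defect x.
Proof.
elim: m => [|m IHm]; first by rewrite mul1r.
apply: le_trans (defect_zsz _) _; rewrite [_ ^+ m.+1]exprS -mulrA.
by apply: ler_wpM2l; first exact: sqr_ge0.
Qed.

Lemma hnorm_iter_zsz_step x m :
  hnorm (iter m zsz x - iter m.+1 zsz x) <= Num.sqrt (defect x) * q ^+ m.
Proof.
apply: hnorm_le; first by rewrite mulr_ge0 ?sqrtr_ge0 ?exprn_ge0.
apply: le_trans (sqnorm_sub_zsz _) _; apply: le_trans (defect_iter_zsz _ _) _.
by rewrite [X in _ <= X]exprMn sqr_sqrtr ?defect_ge0 // mulrC exprAC.
Qed.

Lemma sub_zsz_bounded : bounded_op ip (fun v => v - zsz v).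
Proof.
split=> [a x y|]; first by rewrite lin_z lin_zs scalerBr opprD addrACA.
exists 2 => v; apply: le_trans (hnormD ip_inner _ _) _.
by rewrite (hnormN ip_inner); have := hnorm_zsz_le v; lra.
Qed.

Lemma zsz_fixed_vector : exists2 xi, xi != 0 & zsz xi = xi.
Proof.
have q1_gt0 : 0 < 1 - q by rewrite subr_gt0.
have [x x_neq0 small_defect] := almost_isometric (exprn_gt0 2 q1_gt0).
pose v m := iter m zsz x; pose c := Num.sqrt (defect x).
have c_ge0 : 0 <= c := sqrtr_ge0 _.
have step m : hnorm (v m - v m.+1) <= c * q ^+ m := hnorm_iter_zsz_step x m.
have [xi v_xi] := ip_complete (geometric_cauchy ip_inner c_ge0 q_ge0 q_lt1 step).
exists xi.
  apply/eqP => xi0.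
  have tail m : hnorm (x - v m) <= c / (1 - q).
    by have := geometric_tail_le ip_inner c_ge0 q_ge0 q_lt1 step 0 m; rewrite mulr1.
  have := hnorm_limit_le ip_inner tail v_xi; rewrite xi0 subr0 ler_pdivlMr // => x_le.
  have : (hnorm x * (1 - q)) ^+ 2 <= c ^+ 2.
    by rewrite ler_sqr ?nnegrE ?mulr_ge0 ?hnorm_ge0 // ltW.
  rewrite exprMn sqr_hnorm // sqr_sqrtr ?defect_ge0 //.
  lra.
have sub_v : converges_to ip ((fun w => w - zsz w) \o v) 0.
  by apply: (converges_to_geometric (c := c) q_ge0 q_lt1) => m; rewrite subr0; apply: step.
have := converges_to_unique ip_inner (converges_to_bounded sub_zsz_bounded v_xi) sub_v.
by move/eqP; rewrite subr_eq0 eq_sym => /eqP.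
Qed.

Theorem common_kernel_vector : exists2 xi, xi != 0 & forall i, i \in r -> T i xi = 0.
Proof.
have [xi xi_neq0 fixed] := zsz_fixed_vector.
exists xi => // i i_r.
have : defect xi == 0 by rewrite !sqnormE z_adj fixed subrr.
rewrite defectE psumr_eq0 => [/allP/(_ i i_r)|j _]; last exact: sqnorm_ge0.
by rewrite (sqnorm_eq0 ip_inner) => /eqP.
Qed.

End NormalContraction.

Section SphereRepresentation.
Variables (R : realType) (V : lmodType R[i]) (ip : V -> V -> R[i]).
Variables (n : nat) (q : R) (X Y Xs Ys : nat -> V -> V).
Hypothesis ip_inner : inner_product ip.
Hypotheses (n_ge1 : (1 <= n)%N) (q_gt0 : 0 < q) (q_lt1 : q < 1).
Hypothesis gens_bounded : forall i, (1 <= i <= n)%N ->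
  [/\ bounded_op ip (X i), bounded_op ip (Y i),
      bounded_op ip (Xs i) & bounded_op ip (Ys i)] /\
  is_adjoint ip (X i) (Xs i) /\ is_adjoint ip (Y i) (Ys i).
Hypothesis rels : sphere_relations n q X Y Xs Ys.
Hypothesis X_lt_n : forall i v, (1 <= i)%N -> (i < n)%N -> X i v = 0.

Local Notation Q := (q%:C%C : R[i]).
Local Notation sqnorm := (sqnorm ip).

Lemma n_in_range : (1 <= n <= n)%N. Proof. by rewrite n_ge1 leqnn. Qed.

Lemma lt_n_in_range i : (1 <= i)%N -> (i < n)%N -> (1 <= i <= n)%N.
Proof. by move=> -> /ltnW. Qed.

Section Generator.
Variables (i : nat) (i_range : (1 <= i <= n)%N).

Lemma linX : linear (X i). Proof. by have [[[]]] := gens_bounded i_range. Qed.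
Lemma linY : linear (Y i). Proof. by have [[_ []]] := gens_bounded i_range. Qed.
Lemma linXs : linear (Xs i). Proof. by have [[_ _ []]] := gens_bounded i_range. Qed.
Lemma linYs : linear (Ys i). Proof. by have [[_ _ _ []]] := gens_bounded i_range. Qed.
Lemma adjX : is_adjoint ip (X i) (Xs i). Proof. by have [_ []] := gens_bounded i_range. Qed.
Lemma adjY : is_adjoint ip (Y i) (Ys i). Proof. by have [_ []] := gens_bounded i_range. Qed.

End Generator.

Lemma Q_neq0 : Q != 0.
Proof. by rewrite eq_complex /= gt_eqF. Qed.

Lemma Xs_lt_n i v : (1 <= i)%N -> (i < n)%N -> Xs i v = 0.
Proof.
move=> i_ge1 i_lt_n; apply/eqP; rewrite -(sqnorm_eq0 ip_inner) sqnormE.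
by rewrite (adjoint_swap ip_inner (adjX (lt_n_in_range i_ge1 i_lt_n))) X_lt_n // ip0r.
Qed.

Lemma sum_lt_n_eq0 (F : nat -> V) : (forall i, (1 <= i)%N -> (i < n)%N -> F i = 0) ->
  \sum_(1 <= i < n) F i = 0.
Proof.
by move=> F0; rewrite big_nat_cond big1 // => i /andP[/andP[i_ge1 i_lt_n] _]; apply: F0.
Qed.

Lemma unit_decomposition v : Xs n (X n v) + \sum_(1 <= i < n.+1) Ys i (Y i v) = v.
Proof.
have [_ [_ [_ [_ [_ [_ [_ [_ [_ [_ [_ sum_eq1]]]]]]]]]]] := rels.
rewrite -[RHS]sum_eq1 big_split /=; congr (_ + _).
rewrite big_nat_recr //= sum_lt_n_eq0 ?add0r // => i i_ge1 i_lt_n.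
exact: Xs_lt_n.
Qed.

Lemma Xn_normal v : X n (Xs n v) = Xs n (X n v).
Proof.
have [_ [_ [_ [_ [XXs _]]]]] := rels.
rewrite XXs ?n_in_range // sum_lt_n_eq0 ?scaler0 ?addr0 // => i i_ge1 i_lt_n.
by rewrite X_lt_n // (lin0 (linXs (lt_n_in_range i_ge1 i_lt_n))).
Qed.

Lemma Y_Xn i v : (1 <= i <= n)%N -> Y i (X n v) = Q ^+ (i == n).+1 *: X n (Y i v).
Proof.
have [_ [_ [XY [YX _]]]] := rels.
case/andP=> i_ge1; rewrite leq_eqVlt => /predU1P[->|i_lt_n].
  rewrite eqxx YX ?n_in_range // sum_lt_n_eq0 ?scaler0 ?addr0 // => j j_ge1 j_lt_n.
  by rewrite X_lt_n ?scaler0.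
rewrite ltn_eqF // XY ?n_in_range ?lt_n_in_range ?gtn_eqF //.
by rewrite scalerA mulfV ?Q_neq0 ?scale1r.
Qed.

Lemma Xn_Ys i v : (1 <= i <= n)%N -> X n (Ys i v) = Q ^+ (i == n).+1 *: Ys i (X n v).
Proof.
have [_ [_ [_ [_ [_ [_ [XYs_eq [_ [_ [_ [XYs_gt _]]]]]]]]]]] := rels.
case/andP=> i_ge1; rewrite leq_eqVlt => /predU1P[->|i_lt_n].
  by rewrite eqxx XYs_eq ?n_in_range.
rewrite ltn_eqF // XYs_gt // (X_lt_n _ i_ge1 i_lt_n) (lin0 (linYs n_in_range)).
by rewrite !scaler0 addr0.
Qed.

Lemma sqnorm_decomposition v :
  sqnorm v = sqnorm (X n v) + \sum_(1 <= i < n.+1) sqnorm (Y i v).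
Proof.
have := congr1 (fun w => complex.Re (ip w v)) (unit_decomposition v).
rewrite /= (linD (ip_scalarl ip_inner v)) (lin_sum (ip_scalarl ip_inner v)).
rewrite raddfD raddf_sum /=.
rewrite (adjoint_swap ip_inner (adjX n_in_range)) sqnormE => <-; congr (_ + _).
apply: eq_big_nat => i /andP[i_ge1 i_lt_n1].
by rewrite (adjoint_swap ip_inner (adjY _)) // i_ge1 -ltnS.
Qed.

Lemma sqnorm_Y_Xn i v : (1 <= i <= n)%N ->
  sqnorm (Y i (X n v)) <= q ^+ 2 * sqnorm (X n (Y i v)).
Proof.
move=> i_range; rewrite Y_Xn // -rmorphXn /= (sqnormZ ip_inner).
apply: ler_wpM2r; first exact: sqnorm_ge0.
by rewrite -exprM; apply: ler_wiXn2l; rewrite ?ltW // leq_pmull.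
Qed.

Lemma Xn_kernel_invariant k x : X n x = 0 ->
  X n ((if (1 <= k.2 <= n)%N then gens X Y Xs Ys k else id) x) = 0.
Proof.
case: k => a i /= Xn_x; case: ifP => // i_range.
have [i_ge1 i_le_n] := andP i_range.
have lt_n_of_neq : i != n -> (i < n)%N by rewrite ltn_neqAle i_le_n andbT.
have Xn0 : X n 0 = 0 := lin0 (linX n_in_range).
have Qe_neq0 : Q ^+ (i == n).+1 != 0 by rewrite expf_eq0 (negbTE Q_neq0) andbF.
rewrite /gens /=; case: a => [|[|[|a]]] /=.
- have [->|i_neq_n] := eqVneq i n; first by rewrite Xn_x.
  by rewrite (X_lt_n _ i_ge1 (lt_n_of_neq i_neq_n)).
- have := Y_Xn x i_range; rewrite Xn_x (lin0 (linY i_range)) => /esym/eqP.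
  by rewrite scaler_eq0 (negbTE Qe_neq0) => /eqP.
- have [->|i_neq_n] := eqVneq i n; first by rewrite Xn_normal Xn_x (lin0 (linXs n_in_range)).
  by rewrite (Xs_lt_n _ i_ge1 (lt_n_of_neq i_neq_n)).
- by rewrite Xn_Ys // Xn_x (lin0 (linYs i_range)) scaler0.
Qed.

Lemma Y_common_kernel_vector :
  (forall u, cauchy_seq ip u -> exists l, converges_to ip u l) ->
  (exists v, X n v != 0) ->
  exists xi, xi != 0 /\ forall i, (1 <= i <= n)%N -> Y i xi = 0.
Proof.
move=> ip_complete Xn_neq0.
have sqnorm_Y_Xn' i v : i \in index_iota 1 n.+1 ->
    sqnorm (Y i (X n v)) <= q ^+ 2 * sqnorm (X n (Y i v)).
  by rewrite mem_index_iota ltnS; apply: sqnorm_Y_Xn.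
have [xi xi_neq0 Y_xi] := common_kernel_vector ip_inner ip_complete (ltW q_gt0) q_lt1
  (linX n_in_range) (linXs n_in_range) (adjX n_in_range) Xn_normal
  sqnorm_decomposition sqnorm_Y_Xn' Xn_neq0.
by exists xi; split=> // i i_range; apply: Y_xi; rewrite mem_index_iota ltnS.
Qed.

Lemma Xn_injective :
  irreducible_family ip
    (fun k : nat * nat => if (1 <= k.2 <= n)%N then gens X Y Xs Ys k else id) ->
  (exists v, X n v != 0) ->
  forall v w, X n v = X n w -> v = w.
Proof.
move=> irr [u Xn_u] v w Xn_vw; apply/eqP; rewrite -subr_eq0; apply/eqP.
have Xn_bounded : bounded_op ip (X n) by have [[]] := gens_bounded n_in_range.
have [ker0|kerT] := irr _ (kernel_closed ip_inner Xn_bounded) Xn_kernel_invariant.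
  by apply: ker0; rewrite (linB (linX n_in_range)) Xn_vw subrr.
by move: Xn_u; rewrite kerT eqxx.
Qed.

End SphereRepresentation.

Theorem lemma1p6 (R : realType) (V : lmodType R[i]) (ip : V -> V -> R[i])
    (n : nat) (q : R) (X Y Xs Ys : nat -> V -> V) :
  (1 <= n)%N -> 0 < q -> q < 1 ->
  hilbert_space ip ->
  (forall i, (1 <= i <= n)%N ->
     [/\ bounded_op ip (X i), bounded_op ip (Y i),
         bounded_op ip (Xs i) & bounded_op ip (Ys i)] /\
     is_adjoint ip (X i) (Xs i) /\ is_adjoint ip (Y i) (Ys i)) ->
  sphere_relations n q X Y Xs Ys ->
  (forall i v, (1 <= i)%N -> (i < n)%N -> X i v = 0) ->
  irreducible_family ip
    (fun k : nat * nat => if (1 <= k.2 <= n)%N then gens X Y Xs Ys k else id) ->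
  (exists v, X n v != 0) ->
  (forall v w, X n v = X n w -> v = w) /\
  (exists xi : V, xi != 0 /\ forall i, (1 <= i <= n)%N -> Y i xi = 0).
Proof.
move=> n_ge1 q_gt0 q_lt1 [ip_inner ip_complete] gens_bdd rels X_lt_n irr Xn_neq0.
split; first exact: Xn_injective ip_inner n_ge1 q_gt0 gens_bdd rels X_lt_n irr Xn_neq0.
exact: Y_common_kernel_vector ip_inner n_ge1 q_gt0 q_lt1 gens_bdd rels X_lt_n
  ip_complete Xn_neq0.
Qed.
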